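(* For every $f\in C^\infty(\mathbb S)$ the following operator identities hold on $L^2(\mathbb S)$ (resp. $C^\infty(\mathbb S)$): $$[\mathcal H,\mathcal Hf]=\mathcal H[\mathcal H,f]+F_0f-\hat f_0F_0,\qquad \Lambda[\mathcal H,\mathcal Hf]\Lambda=\Lambda f\Lambda-DfD,$$ where $\mathcal Hf$ and $f$ denote multiplication operators by these functions, $[A,B]=AB-BA$, and $F_0$ maps $u$ to the constant function $\hat u_0\mathbf 1$.
   Context: $u=\sum_k\hat u_ke^{ik\theta}$ (Fourier coefficients). $D=-i\,d/d\theta$, $\Lambda e^{in\theta}=|n|e^{in\theta}$, Hilbert transform $\mathcal H\mathbf 1=0$, $\mathcal He^{in\theta}=\mathrm{sgn}(n)e^{in\theta}$ for $n\ne0$. *)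

(* Functions on the circle S are represented by
   their Fourier coefficient sequences  k |-> \hat u_k  (k : Z), with values
   in Coquelicot's complex numbers C. *)
From Stdlib Require Import Reals ZArith Lra.
From Coquelicot Require Import Coquelicot.
Open Scope R_scope.

Definition Fc := Z -> C.

Definition CSeries (a : nat -> C) : C :=
  (Series (fun n => fst (a n)), Series (fun n => snd (a n))).

Definition zsum (a : Z -> C) : C :=
  Cplus (CSeries (fun n => a (Z.of_nat n)))
        (CSeries (fun n => a (- Z.of_nat n - 1)%Z)).

(* u in L^2(S)  <->  (\hat u_k) in l^2(Z)  (Parseval) *)
Definition in_L2 (u : Fc) : Prop :=
  ex_series (fun n => (Cmod (u (Z.of_nat n)))^2) /\
  ex_series (fun n => (Cmod (u (- Z.of_nat n - 1)%Z))^2).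

(* u in C^infty(S)  <->  (\hat u_k) rapidly decreasing *)
Definition in_Cinf (u : Fc) : Prop :=
  forall m : nat, exists M : R, forall k : Z,
    Cmod (u k) * (1 + IZR (Z.abs k)) ^ m <= M.

Definition mulop (f : Fc) (u : Fc) : Fc :=
  fun k => zsum (fun j => Cmult (f (k - j)%Z) (u j)).

(* Hilbert transform: H 1 = 0, H e^{in.} = sgn(n) e^{in.} *)
Definition Hop (u : Fc) : Fc := fun k => Cmult (RtoC (IZR (Z.sgn k))) (u k).
Definition Lam (u : Fc) : Fc := fun k => Cmult (RtoC (IZR (Z.abs k))) (u k).
(* D = -i d/dtheta : e^{in.} -> n e^{in.} *)
Definition Dop (u : Fc) : Fc := fun k => Cmult (RtoC (IZR k)) (u k).
Definition F0 (u : Fc) : Fc := fun k => if Z.eq_dec k 0 then u 0%Z else RtoC 0.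

Definition addop (u v : Fc) : Fc := fun k => Cplus (u k) (v k).
Definition subop (u v : Fc) : Fc := fun k => Cminus (u k) (v k).
Definition scalop (c : C) (u : Fc) : Fc := fun k => Cmult c (u k).

Definition comm (A B : Fc -> Fc) (u : Fc) : Fc := subop (A (B u)) (B (A u)).

(* Everything is computed on Fourier coefficients.  For f rapidly decreasing
   and u square summable, the k-th coefficient of every product f u occurring
   in the identities is an absolutely convergent sum  sum_j r(j) A_k(j)  of the
   convolution summands  A_k(j) = f_(k-j) u_j  against a bounded real weight r.
   Such weighted sums are linear in the weight, so the first identity at the
   coefficient k reduces to a pointwise identity between sign symbols,
     sgn(k-j) (sgn k - sgn j) = sgn k (sgn k - sgn j) + [k = 0] [j <> 0].  The second identity is a formal
   consequence of the first one applied to  Lambda u : Lambda annihilates the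
   constants produced by F0, and  Lambda H = D,  Lambda H^2 = Lambda. *)

From Stdlib Require Import Reals ZArith Lia Lra FunctionalExtensionality.
From Coquelicot Require Import Coquelicot.
Open Scope R_scope.

Ltac C_ring :=
  apply injective_projections; cbn [fst snd Cplus Cmult Cminus Copp RtoC]; ring.

(* A real sequence indexed by Z is summable on both halves of Z; this is the
   convergence notion behind [zsum] (and [in_L2] is an instance of it). *)
Definition two_sided_summable (a : Z -> R) : Prop :=
  ex_series (fun n => a (Z.of_nat n)) /\ ex_series (fun n => a (- Z.of_nat n - 1)%Z).

Lemma two_sided_summable_scal (c : R) (a : Z -> R) :
  two_sided_summable a -> two_sided_summable (fun j => c * a j).
Proof.
  intros [Hp Hn]; split;
    [exact (@ex_series_scal_l R_AbsRing R_NormedModule c _ Hp)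
    |exact (@ex_series_scal_l R_AbsRing R_NormedModule c _ Hn)].
Qed.

Lemma two_sided_summable_plus (a b : Z -> R) :
  two_sided_summable a -> two_sided_summable b ->
  two_sided_summable (fun j => a j + b j).
Proof.
  intros [Ha1 Ha2] [Hb1 Hb2]; split;
    [exact (@ex_series_plus R_AbsRing R_NormedModule _ _ Ha1 Hb1)
    |exact (@ex_series_plus R_AbsRing R_NormedModule _ _ Ha2 Hb2)].
Qed.

Lemma two_sided_summable_le (a b : Z -> R) :
  (forall j, 0 <= a j <= b j) -> two_sided_summable b -> two_sided_summable a.
Proof.
  intros Hab [Hb1 Hb2].
  assert (Hnorm : forall j, norm (a j) <= b j).
  { intro j; change (norm (a j)) with (Rabs (a j)).
    rewrite Rabs_pos_eq; apply Hab. }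
  split; [exact (@ex_series_le R_AbsRing R_CompleteNormedModule _ _ (fun n => Hnorm _) Hb1)
         |exact (@ex_series_le R_AbsRing R_CompleteNormedModule _ _ (fun n => Hnorm _) Hb2)].
Qed.

Lemma ex_series_fst_snd (a : nat -> C) :
  ex_series (fun n => Cmod (a n)) ->
  ex_series (fun n => fst (a n)) /\ ex_series (fun n => snd (a n)).
Proof.
  intro H; split;
    apply (@ex_series_le R_AbsRing R_CompleteNormedModule _ (fun n => Cmod (a n))); auto;
    intro n; change (norm ?x) with (Rabs x);
    (eapply Rle_trans; [|apply Rmax_Cmod]); [apply Rmax_l|apply Rmax_r].
Qed.

Lemma CSeries_plus (a b : nat -> C) :
  ex_series (fun n => Cmod (a n)) -> ex_series (fun n => Cmod (b n)) ->
  CSeries (fun n => Cplus (a n) (b n)) = Cplus (CSeries a) (CSeries b).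
Proof.
  intros Ha Hb.
  destruct (ex_series_fst_snd a Ha) as [Ha1 Ha2].
  destruct (ex_series_fst_snd b Hb) as [Hb1 Hb2].
  unfold CSeries; apply injective_projections; cbn [fst snd Cplus];
    rewrite <- Series_plus by assumption; apply Series_ext; reflexivity.
Qed.

Lemma CSeries_scal (r : R) (a : nat -> C) :
  CSeries (fun n => Cmult (RtoC r) (a n)) = Cmult (RtoC r) (CSeries a).
Proof.
  unfold CSeries; apply injective_projections; cbn [fst snd Cmult RtoC];
    rewrite <- Series_scal_l;
    [rewrite Rmult_0_l, Rminus_0_r|rewrite Rmult_0_l, Rplus_0_r];
    apply Series_ext; intro; simpl; ring.
Qed.

Definition abs_summable (A : Fc) : Prop := two_sided_summable (fun j => Cmod (A j)).

Lemma zsum_plus (A B : Fc) :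
  abs_summable A -> abs_summable B ->
  zsum (fun j => Cplus (A j) (B j)) = Cplus (zsum A) (zsum B).
Proof.
  intros [HA1 HA2] [HB1 HB2]; unfold zsum.
  rewrite (CSeries_plus (fun n => A (Z.of_nat n))),
          (CSeries_plus (fun n => A (- Z.of_nat n - 1)%Z)) by assumption.
  C_ring.
Qed.

Lemma zsum_scal (r : R) (A : Fc) :
  zsum (fun j => Cmult (RtoC r) (A j)) = Cmult (RtoC r) (zsum A).
Proof.
  unfold zsum.
  rewrite (CSeries_scal r (fun n => A (Z.of_nat n))),
          (CSeries_scal r (fun n => A (- Z.of_nat n - 1)%Z)).
  C_ring.
Qed.

Lemma Series_first_term (x : R) :
  Series (fun n => match n with O => x | S _ => 0 end) = x.
Proof.
  rewrite (Series_ext _ (fun n => x * 0 ^ n)) by (intros [|n]; simpl; ring).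
  rewrite Series_scal_l, Series_geom by (rewrite Rabs_R0; lra).
  field.
Qed.

Lemma zsum_delta (x : C) :
  zsum (fun j => if Z.eq_dec j 0%Z then x else RtoC 0) = x.
Proof.
  unfold zsum, CSeries; apply injective_projections; cbn [fst snd Cplus];
  [ transitivity (Series (fun n => match n with O => fst x | S _ => 0 end)
                  + Series (fun n => match n with O => 0 | S _ => 0 end))
  | transitivity (Series (fun n => match n with O => snd x | S _ => 0 end)
                  + Series (fun n => match n with O => 0 | S _ => 0 end)) ];
  try (rewrite !Series_first_term; ring);
  f_equal; apply Series_ext; intros [|n]; cbv beta;
  (destruct (Z.eq_dec _ 0%Z); simpl; [reflexivity || lia | reflexivity || lia]).
Qed.

Definition delta0 (j : Z) : R := if Z.eq_dec j 0%Z then 1 else 0.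

Definition bounded (r : Z -> R) : Prop := exists M, forall j, Rabs (r j) <= M.

Definition wsum (A : Fc) (r : Z -> R) : C := zsum (fun j => Cmult (RtoC (r j)) (A j)).

Lemma abs_summable_weighted (A : Fc) (r : Z -> R) :
  abs_summable A -> bounded r -> abs_summable (fun j => Cmult (RtoC (r j)) (A j)).
Proof.
  intros HA [M HM].
  apply (two_sided_summable_le _ (fun j => M * Cmod (A j))).
  - intro j; rewrite Cmod_mult, Cmod_R; split.
    + apply Rmult_le_pos; [apply Rabs_pos|apply Cmod_ge_0].
    + apply Rmult_le_compat_r; [apply Cmod_ge_0|apply HM].
  - apply two_sided_summable_scal, HA.
Qed.

Lemma bounded_const (a : R) : bounded (fun _ => a).
Proof. exists (Rabs a); intro; lra. Qed.

Lemma bounded_scal (a : R) (r : Z -> R) : bounded r -> bounded (fun j => a * r j).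
Proof.
  intros [M HM]; exists (Rabs a * M); intro j.
  rewrite Rabs_mult; apply Rmult_le_compat_l; [apply Rabs_pos|apply HM].
Qed.

Lemma bounded_minus (r1 r2 : Z -> R) : bounded r1 -> bounded r2 -> bounded (fun j => r1 j - r2 j).
Proof.
  intros [M1 H1] [M2 H2]; exists (M1 + M2); intro j; unfold Rminus.
  eapply Rle_trans; [apply Rabs_triang|]; rewrite Rabs_Ropp; apply Rplus_le_compat; auto.
Qed.

Lemma bounded_mult (r1 r2 : Z -> R) : bounded r1 -> bounded r2 -> bounded (fun j => r1 j * r2 j).
Proof.
  intros [M1 H1] [M2 H2]; exists (M1 * M2); intro j.
  rewrite Rabs_mult; apply Rmult_le_compat; auto; apply Rabs_pos.
Qed.

Lemma bounded_sgn (g : Z -> Z) : bounded (fun j => IZR (Z.sgn (g j))).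
Proof.
  exists 1; intro j.
  destruct (Z.sgn_spec (g j)) as [[_ ->]|[[_ ->]|[_ ->]]];
    rewrite ?opp_IZR, ?Rabs_Ropp, ?Rabs_R0, ?Rabs_R1; lra.
Qed.

Lemma bounded_delta0 : bounded delta0.
Proof. exists 1; intro j; unfold delta0; destruct (Z.eq_dec j 0%Z); rewrite ?Rabs_R0, ?Rabs_R1; lra. Qed.

Ltac bounded_tac :=
  repeat first [ apply bounded_sgn | apply bounded_delta0 | apply bounded_const
               | apply bounded_mult | apply bounded_minus ].

Lemma wsum_ext (A : Fc) (r1 r2 : Z -> R) :
  (forall j, r1 j = r2 j) -> wsum A r1 = wsum A r2.
Proof. intro H; apply functional_extensionality in H; now subst. Qed.

Lemma wsum_scal (A : Fc) (a : R) (r : Z -> R) :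
  Cmult (RtoC a) (wsum A r) = wsum A (fun j => a * r j).
Proof.
  unfold wsum; rewrite <- zsum_scal; f_equal.
  apply functional_extensionality; intro j; C_ring.
Qed.

Lemma wsum_plus (A : Fc) (r1 r2 : Z -> R) :
  abs_summable A -> bounded r1 -> bounded r2 ->
  Cplus (wsum A r1) (wsum A r2) = wsum A (fun j => r1 j + r2 j).
Proof.
  intros HA H1 H2; unfold wsum.
  rewrite <- zsum_plus by (apply abs_summable_weighted; assumption).
  f_equal; apply functional_extensionality; intro j; C_ring.
Qed.

Lemma wsum_minus (A : Fc) (r1 r2 : Z -> R) :
  abs_summable A -> bounded r1 -> bounded r2 ->
  Cminus (wsum A r1) (wsum A r2) = wsum A (fun j => r1 j - r2 j).
Proof.
  intros HA H1 H2.
  replace (Cminus (wsum A r1) (wsum A r2))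
    with (Cplus (wsum A r1) (Cmult (RtoC (-1)) (wsum A r2))) by C_ring.
  rewrite wsum_scal, wsum_plus by (try apply bounded_scal; assumption).
  apply wsum_ext; intro j; ring.
Qed.

Lemma wsum_one (A : Fc) : wsum A (fun _ => 1) = zsum A.
Proof. unfold wsum; f_equal; apply functional_extensionality; intro j; C_ring. Qed.

Lemma wsum_zero (A : Fc) : wsum A (fun _ => 0) = RtoC 0.
Proof.
  rewrite <- (wsum_ext A (fun j => 0 * 1)) by (intro; ring).
  rewrite <- wsum_scal; C_ring.
Qed.

Lemma wsum_delta0 (A : Fc) : wsum A delta0 = A 0%Z.
Proof.
  unfold wsum; rewrite <- (zsum_delta (A 0%Z)); f_equal.
  apply functional_extensionality; intro j; unfold delta0.
  destruct (Z.eq_dec j 0%Z); [subst; C_ring|C_ring].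
Qed.


(* The summable weight (1 + |j|)^-2 that controls rapidly decreasing sequences. *)
Definition decay_weight (j : Z) : R := / (1 + IZR (Z.abs j)) ^ 2.

Lemma IZR_abs_nonneg (j : Z) : 0 <= IZR (Z.abs j).
Proof. apply IZR_le; lia. Qed.

(* Telescoping bound  sum_(k <= n) (k+1)^-2 <= 2 - (n+1)^-1. *)
Lemma inv_sq_partial_sum_bound (n : nat) :
  sum_n (fun k => / (INR k + 1) ^ 2) n <= 2 - / (INR n + 1).
Proof.
  induction n as [|n IH].
  - rewrite sum_O; simpl; lra.
  - rewrite sum_Sn; change plus with Rplus; rewrite S_INR.
    assert (Hx := pos_INR n); set (x := INR n) in *.
    assert (/ (x + 1 + 1) ^ 2 <= / (x + 1) - / (x + 1 + 1)).
    { replace (/ (x + 1) - / (x + 1 + 1)) with (/ ((x + 1) * (x + 1 + 1))) by (field; lra).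
      apply Rinv_le_contravar; nra. }
    lra.
Qed.

Lemma inv_sq_summable : ex_series (fun n => / (INR n + 1) ^ 2).
Proof.
  destruct (ex_finite_lim_seq_incr (sum_n (fun n => / (INR n + 1) ^ 2)) 2) as [l Hl].
  - intro n; rewrite sum_Sn; change plus with Rplus.
    assert (Hx := pos_INR (S n)).
    assert (0 < / (INR (S n) + 1) ^ 2) by (apply Rinv_0_lt_compat; nra).
    lra.
  - intro n; eapply Rle_trans; [apply inv_sq_partial_sum_bound|].
    assert (Hx := pos_INR n).
    assert (0 < / (INR n + 1)) by (apply Rinv_0_lt_compat; lra).
    lra.
  - exists l; exact Hl.
Qed.

Lemma decay_weight_summable : two_sided_summable decay_weight.
Proof.
  unfold decay_weight; split.
  - apply (ex_series_ext (fun n => / (INR n + 1) ^ 2)); [|exact inv_sq_summable].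
    intro n; rewrite Z.abs_eq by lia; rewrite <- INR_IZR_INZ; f_equal; ring.
  - apply (@ex_series_le R_AbsRing R_CompleteNormedModule _ (fun n => / (INR n + 1) ^ 2));
      [|exact inv_sq_summable].
    intro n; change (norm ?x) with (Rabs x).
    replace (Z.abs (- Z.of_nat n - 1)) with (Z.of_nat n + 1)%Z by lia.
    rewrite plus_IZR, <- INR_IZR_INZ.
    assert (Hx := pos_INR n).
    rewrite Rabs_pos_eq by (left; apply Rinv_0_lt_compat; nra).
    apply Rinv_le_contravar; nra.
Qed.

Lemma peetre_inequality (k j : Z) :
  1 + IZR (Z.abs j) <= (1 + IZR (Z.abs k)) * (1 + IZR (Z.abs (k - j))).
Proof.
  assert (Htri : IZR (Z.abs j) <= IZR (Z.abs k) + IZR (Z.abs (k - j)))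
    by (rewrite <- plus_IZR; apply IZR_le; lia).
  assert (H1 := IZR_abs_nonneg k); assert (H2 := IZR_abs_nonneg (k - j)).
  nra.
Qed.

Lemma rapid_decay_shift (f : Fc) (k : Z) :
  in_Cinf f -> exists C, 0 <= C /\ forall j, Cmod (f (k - j)%Z) <= C * decay_weight j.
Proof.
  intro hf; destruct (hf 2%nat) as [M HM].
  assert (HM0 : 0 <= M).
  { specialize (HM 0%Z); assert (Hx := Cmod_ge_0 (f 0%Z)); simpl in HM; nra. }
  exists (M * (1 + IZR (Z.abs k)) ^ 2); split; [apply Rmult_le_pos; [exact HM0|apply pow2_ge_0]|].
  intro j; specialize (HM (k - j)%Z); unfold decay_weight.
  assert (Hp := peetre_inequality k j).
  assert (H1 := IZR_abs_nonneg j); assert (H2 := IZR_abs_nonneg k).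
  assert (H3 := IZR_abs_nonneg (k - j)); assert (Hx := Cmod_ge_0 (f (k - j)%Z)).
  set (x := Cmod (f (k - j)%Z)) in *.
  set (p := 1 + IZR (Z.abs j)) in *; set (q := 1 + IZR (Z.abs (k - j))) in *.
  set (s := 1 + IZR (Z.abs k)) in *.
  assert (Hp2 : p ^ 2 <= (s * q) ^ 2) by (apply pow_incr; split; [unfold p|]; lra).
  assert (Hxp : x * p ^ 2 <= M * s ^ 2).
  { apply Rle_trans with (s ^ 2 * (x * q ^ 2)).
    - rewrite Rpow_mult_distr in Hp2.
      replace (s ^ 2 * (x * q ^ 2)) with (x * (s ^ 2 * q ^ 2)) by ring.
      apply Rmult_le_compat_l; assumption.
    - rewrite (Rmult_comm M); apply Rmult_le_compat_l; [apply pow2_ge_0|exact HM]. }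
  assert (Hp0 : 0 < p) by (unfold p; lra).
  assert (Hpos : 0 < p ^ 2) by (apply pow_lt; exact Hp0).
  replace x with (x * p ^ 2 * / p ^ 2) by (field; lra).
  apply Rmult_le_compat_r; [left; apply Rinv_0_lt_compat; exact Hpos|exact Hxp].
Qed.

Definition conv_summand (f u : Fc) (k : Z) : Fc := fun j => Cmult (f (k - j)%Z) (u j).

(* For f rapidly decreasing and u in L^2 these summands are absolutely
   summable, since  |f_(k-j)| |u_j| <= C (1 + |j|)^-2 + C |u_j|^2. *)
Lemma conv_summand_summable (f u : Fc) (k : Z) :
  in_Cinf f -> in_L2 u -> abs_summable (conv_summand f u k).
Proof.
  intros hf hu; destruct (rapid_decay_shift f k hf) as [C [HC Hf]].
  apply (two_sided_summable_le _ (fun j => C * decay_weight j + C * Cmod (u j) ^ 2)).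
  - intro j; unfold conv_summand; rewrite Cmod_mult; split;
      [apply Rmult_le_pos; apply Cmod_ge_0|].
    assert (Hw0 : 0 < decay_weight j).
    { unfold decay_weight; assert (H := IZR_abs_nonneg j);
      apply Rinv_0_lt_compat; nra. }
    assert (Hw1 : decay_weight j <= 1).
    { unfold decay_weight; rewrite <- Rinv_1; assert (H := IZR_abs_nonneg j);
      apply Rinv_le_contravar; nra. }
    assert (Hy := Cmod_ge_0 (u j)); specialize (Hf j).
    apply Rle_trans with (C * decay_weight j * Cmod (u j));
      [apply Rmult_le_compat_r; assumption|].
    set (y := Cmod (u j)) in *; set (w := decay_weight j) in *.
    assert (w * y <= w + y ^ 2) by nra.
    replace (C * w * y) with (C * (w * y)) by ring.
    rewrite <- Rmult_plus_distr_l; apply Rmult_le_compat_l; assumption.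
  - apply two_sided_summable_plus; apply two_sided_summable_scal;
      [exact decay_weight_summable|exact hu].
Qed.

Lemma Cinf_L2 (u : Fc) : in_Cinf u -> in_L2 u.
Proof.
  intro hu; destruct (hu 1%nat) as [M HM].
  apply (two_sided_summable_le (fun j => Cmod (u j) ^ 2) (fun j => M ^ 2 * decay_weight j));
    [|apply two_sided_summable_scal, decay_weight_summable].
  intro j; split; [apply pow2_ge_0|].
  specialize (HM j); rewrite pow_1 in HM; unfold decay_weight.
  assert (Hy := Cmod_ge_0 (u j)); assert (Hp := IZR_abs_nonneg j).
  set (y := Cmod (u j)) in *; set (p := 1 + IZR (Z.abs j)) in *.
  assert (Hp0 : 0 < p) by (unfold p; lra).
  replace (y ^ 2) with ((y * p) ^ 2 * / p ^ 2) by (field; lra).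
  apply Rmult_le_compat_r; [left; apply Rinv_0_lt_compat; nra|].
  apply pow_incr; split; [nra|exact HM].
Qed.

Lemma Lam_Cinf (u : Fc) : in_Cinf u -> in_Cinf (Lam u).
Proof.
  intros hu m; destruct (hu (S m)) as [M HM]; exists M; intro j; specialize (HM j).
  unfold Lam; rewrite Cmod_mult, Cmod_R, Rabs_pos_eq by apply IZR_abs_nonneg.
  simpl in HM; assert (Hy := Cmod_ge_0 (u j)); assert (Hp := IZR_abs_nonneg j).
  assert (0 <= (1 + IZR (Z.abs j)) ^ m) by (apply pow_le; lra).
  nra.
Qed.

(* The sign symbol of the commutator identity: with f-frequency k - j and
   u-frequency j,  sgn(k-j) (sgn k - sgn j) = sgn k (sgn k - sgn j) + [k=0][j<>0]. *)
Lemma hilbert_symbol (k j : Z) :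
  IZR (Z.sgn (k - j)) * (IZR (Z.sgn k) - IZR (Z.sgn j))
  = IZR (Z.sgn k) * (IZR (Z.sgn k) - IZR (Z.sgn j)) + delta0 k * (1 - delta0 j).
Proof.
  unfold delta0.
  destruct (Z.eq_dec k 0%Z) as [Hk|Hk]; destruct (Z.eq_dec j 0%Z) as [Hj|Hj];
  destruct (Z.sgn_spec k) as [[? ->]|[[? ->]|[? ->]]];
  destruct (Z.sgn_spec j) as [[? ->]|[[? ->]|[? ->]]];
  destruct (Z.sgn_spec (k - j)) as [[? ->]|[[? ->]|[? ->]]];
  rewrite ?opp_IZR; simpl; try lia; lra.
Qed.

Lemma mulop_as_wsum (g v : Fc) (k : Z) (A : Fc) (r : Z -> R) :
  (forall j, Cmult (g (k - j)%Z) (v j) = Cmult (RtoC (r j)) (A j)) ->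
  mulop g v k = wsum A r.
Proof. intro H; unfold mulop, wsum; f_equal; now apply functional_extensionality. Qed.

Lemma Hop_coef (w : Fc) (k : Z) : Hop w k = Cmult (RtoC (IZR (Z.sgn k))) (w k).
Proof. reflexivity. Qed.

Lemma F0_correction (f u : Fc) (k : Z) :
  abs_summable (conv_summand f u k) ->
  Cminus (F0 (mulop f u) k) (Cmult (f 0%Z) (F0 u k))
  = wsum (conv_summand f u k) (fun j => delta0 k * (1 - delta0 j)).
Proof.
  intro HA; unfold F0, delta0 at 1.
  destruct (Z.eq_dec k 0%Z) as [->|Hk].
  - rewrite (wsum_ext _ _ (fun j => 1 - delta0 j)) by (intro; ring).
    rewrite <- wsum_minus by (bounded_tac || exact HA).
    rewrite wsum_one, wsum_delta0; reflexivity.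
  - rewrite (wsum_ext _ _ (fun _ => 0)) by (intro; ring).
    rewrite wsum_zero; C_ring.
Qed.

Lemma hilbert_commutator_L2 (f u : Fc) :
  in_Cinf f -> in_L2 u ->
  comm Hop (mulop (Hop f)) u =
  addop (Hop (comm Hop (mulop f) u))
        (subop (F0 (mulop f u)) (scalop (f 0%Z) (F0 u))).
Proof.
  intros hf hu; apply functional_extensionality; intro k.
  set (A := conv_summand f u k).
  assert (HA : abs_summable A) by (apply conv_summand_summable; assumption).
  unfold comm, addop, subop, scalop; rewrite F0_correction by exact HA.
  repeat (rewrite Hop_coef; cbv beta).
  rewrite (mulop_as_wsum (Hop f) u k A (fun j => IZR (Z.sgn (k - j)))),
    (mulop_as_wsum (Hop f) (Hop u) k A (fun j => IZR (Z.sgn (k - j)) * IZR (Z.sgn j))),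
    (mulop_as_wsum f u k A (fun _ => 1)),
    (mulop_as_wsum f (Hop u) k A (fun j => IZR (Z.sgn j)))
    by (intro j; unfold A, conv_summand, Hop; C_ring).
  repeat first [ rewrite wsum_scal
               | rewrite wsum_minus by (exact HA || bounded_tac)
               | rewrite wsum_plus by (exact HA || bounded_tac) ].
  apply wsum_ext; intro j.
  transitivity (IZR (Z.sgn (k - j)) * (IZR (Z.sgn k) - IZR (Z.sgn j))); [ring|].
  rewrite hilbert_symbol; ring.
Qed.

Lemma Dop_eq_Hop_Lam (u : Fc) : Dop u = Hop (Lam u).
Proof.
  apply functional_extensionality; intro k; unfold Dop, Hop, Lam.
  replace (IZR k) with (IZR (Z.sgn k) * IZR (Z.abs k))
    by (rewrite <- mult_IZR, Z.mul_comm, Z.abs_sgn; reflexivity).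
  C_ring.
Qed.

(* Lambda H [H, G] = Lambda G - D G H, from  Lambda H^2 = Lambda  and
   Lambda H = D  as Fourier multipliers. *)
Lemma Lam_Hop_comm_Hop (G : Fc -> Fc) (v : Fc) :
  Lam (Hop (comm Hop G v)) = subop (Lam (G v)) (Dop (G (Hop v))).
Proof.
  apply functional_extensionality; intro k; unfold Lam, Hop, comm, subop, Dop.
  destruct (Z.lt_trichotomy k 0) as [Hk|[->|Hk]].
  - rewrite (Z.sgn_neg k Hk), (Z.abs_neq k), !opp_IZR by lia; C_ring.
  - simpl; C_ring.
  - rewrite (Z.sgn_pos k Hk), (Z.abs_eq k) by lia; C_ring.
Qed.

Lemma Lam_F0_correction (w a b : Fc) (c : C) :
  Lam (addop w (subop (F0 a) (scalop c (F0 b)))) = Lam w.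
Proof.
  apply functional_extensionality; intro k; unfold Lam, addop, subop, scalop, F0.
  destruct (Z.eq_dec k 0%Z) as [->|Hk]; simpl; C_ring.
Qed.

Theorem lemma5p1 (f : Fc) (hf : in_Cinf f) :
  (forall u : Fc, in_L2 u ->
     comm Hop (mulop (Hop f)) u =
     addop (Hop (comm Hop (mulop f) u))
           (subop (F0 (mulop f u)) (scalop (f 0%Z) (F0 u)))) /\
  (forall u : Fc, in_Cinf u ->
     Lam (comm Hop (mulop (Hop f)) (Lam u)) =
     subop (Lam (mulop f (Lam u))) (Dop (mulop f (Dop u)))).
Proof.
  split.
  - intros u hu; exact (hilbert_commutator_L2 f u hf hu).
  - intros u hu.
    assert (hLu : in_L2 (Lam u)) by (apply Cinf_L2, Lam_Cinf, hu).
    rewrite (hilbert_commutator_L2 f (Lam u) hf hLu), Lam_F0_correction,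
            Lam_Hop_comm_Hop, (Dop_eq_Hop_Lam u).
    reflexivity.
Qed.
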